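(* Let $Q=(I,\Omega)$ be a quiver, $\alpha\in\mathbb{N}^I$, and let $F^*:0=F^0\subset F^1\subset\cdots\subset F^s=\bigoplus_{i\in I}\mathbb{C}^{\alpha_i}$ be a flag of $I$-graded subspaces. For $\underline{n}\in\mathbb{N}_{\geq 1}^{\Omega}$ and $r\geq 0$ let $S_r^{\underline{n}}\subseteq \mathrm{End}(\alpha)_{F^*}$ and $s_r^{\underline{n}}=\dim S_r^{\underline{n}}$ be as defined in the context. Then there exists $\underline{n_0}\in\mathbb{Z}^{\Omega}$ such that for all $\underline{n}\geq\underline{n_0}$ (componentwise), $$s_0^{\underline{n}}=\max_{r\geq 0}\bigl(s_r^{\underline{n}}-r\bigr).$$
   Context: Write $V_i=\mathbb{C}^{\alpha_i}$ and $F^k_i=F^k\cap V_i$. For $\underline{n}\in\mathbb{N}_{\geq1}^{\Omega}$, $Q_{\underline{n}}$ is the quiver with vertex set $I$ obtained from $Q$ by replacing each arrow $h:i\to j$ by $n_h$ identical arrows $i\to j$. A linear map $f:V_i\to V_j$ is compatible with $F^*$ if $f(F^k_i)\subseteq F^k_j$ for all $k$; $\mathrm{Hom}(V_i,V_j)_{F^*}$ denotes the space of such maps. $\mathrm{Rep}(Q_{\underline{n}},\alpha)_{F^*}$ is the vector space of representations $x=(x_a)$ of $Q_{\underline{n}}$ on $(V_i)_{i\in I}$ with every $x_a$ (for $a:i\to j$) in $\mathrm{Hom}(V_i,V_j)_{F^*}$. $\mathrm{End}(\alpha)_{F^*}$ is the space of tuples $g=(g_i)_{i\in I}$, $g_i\in\mathrm{End}(V_i)$,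 with $g_i(F^k_i)\subseteq F^k_i$ for all $i,k$. For $g\in\mathrm{End}(\alpha)_{F^*}$ let $W_{\underline{n}}(g)=\{x\in \mathrm{Rep}(Q_{\underline{n}},\alpha)_{F^*}: g_jx_a=x_ag_i \text{ for every arrow } a:i\to j\}$ (a linear subspace). Define $S_r^{\underline{n}}=\{g\in\mathrm{End}(\alpha)_{F^*}:\dim W_{\underline{n}}(g)\geq \dim \mathrm{Rep}(Q_{\underline{n}},\alpha)_{F^*}-r\}$ and $s_r^{\underline{n}}=\dim S_r^{\underline{n}}$. For $\underline{m},\underline{n}\in\mathbb{Z}^\Omega$, $\underline{n}\geq\underline{m}$ means $n_h\geq m_h$ for all $h\in\Omega$. *)

From HB Require Import structures.
From mathcomp Require Import all_boot all_order all_algebra.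
From mathcomp Require Import complex.
From mathcomp Require Import reals.
From mathcomp Require Import mpoly.
From Stdlib Require Import ClassicalEpsilon.

Set Implicit Arguments.
Unset Strict Implicit.
Unset Printing Implicit Defensive.

Import GRing.Theory.
Local Open Scope ring_scope.

Definition pbool (P : Prop) : bool :=
  if excluded_middle_informative P then true else false.

Section Dims.
Variable F : fieldType.

Definition lin_indep (L : finType) (k : nat) (v : 'I_k -> L -> F) : Prop :=
  forall c : 'I_k -> F,
    (forall l : L, \sum_(j < k) c j * v j l = 0) -> forall j, c j = 0.

Definition ldim (L : finType) (X : (L -> F) -> Prop) : nat :=
  \max_(k < #|L|.+1 |
        pbool (exists v : 'I_k -> L -> F, (forall j, X (v j)) /\ lin_indep v)) k.

(* Algebraic (Krull) dimension of (the Zariski closure of) a subset X of the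
   affine space F^K: the largest size of a set J of coordinates whose
   coordinate functions are algebraically independent on X, i.e. no nonzero
   polynomial in the variables indexed by J vanishes on X. *)
Definition coord_pt (K : finType) (x : K -> F) : 'I_#|K| -> F :=
  fun i => x (enum_val i).

Definition vars_in (K : finType) (J : {set K}) (p : {mpoly F[#|K|]}) : Prop :=
  forall m, m \in msupp p -> forall i : 'I_#|K|, (m i != 0)%N -> enum_val i \in J.

Definition alg_indep_on (K : finType) (X : (K -> F) -> Prop) (J : {set K}) : Prop :=
  forall p : {mpoly F[#|K|]}, vars_in J p ->
    (forall x, X x -> p.@[coord_pt x] = 0) -> p = 0.

Definition adim (K : finType) (X : (K -> F) -> Prop) : nat :=
  \max_(k < #|K|.+1 |
        pbool (exists J : {set K}, #|J| = k /\ alg_indep_on X J)) k.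

End Dims.

Section QuiverFlag.
Variable F : fieldType.
Variables (I Om : finType) (src tgt : Om -> I).
(* dimension vector alpha; V_i = F^(alpha i) (row vectors, maps act on the
   right: v |-> v *m f) *)
Variable alpha : I -> nat.
(* the flag F^0 ⊂ ... ⊂ F^s of I-graded subspaces, given by its graded
   pieces F^k_i = F^k ∩ V_i, each as the row space of a square matrix *)
Variable s : nat.
Variable Fl : nat -> forall i : I, 'M[F]_(alpha i).

Definition is_graded_flag : Prop :=
  [/\ forall i, Fl 0 i = 0,
      forall i, ((1%:M : 'M[F]_(alpha i)) <= Fl s i)%MS &
      forall k i, (k < s)%N -> (Fl k i <= Fl k.+1 i)%MS].

Definition hom_compat (i j : I) (f : 'M[F]_(alpha i, alpha j)) : Prop :=
  forall k, (k <= s)%N -> (Fl k i *m f <= Fl k j)%MS.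

Definition end_compat (g : forall i, 'M[F]_(alpha i)) : Prop :=
  forall i k, (k <= s)%N -> (Fl k i *m g i <= Fl k i)%MS.

(* arrows of Q_n : n_h copies of each arrow h *)
Definition arrn (n : Om -> nat) := {h : Om & 'I_(n h)}.
Definition asrc (n : Om -> nat) (a : arrn n) : I := src (tag a).
Definition atgt (n : Om -> nat) (a : arrn n) : I := tgt (tag a).

Definition rep (n : Om -> nat) :=
  forall a : arrn n, 'M[F]_(alpha (asrc a), alpha (atgt a)).

Definition rep_compat (n : Om -> nat) (x : rep n) : Prop :=
  forall a : arrn n, hom_compat (x a).

(* W_n(g): g_j x_a = x_a g_i for a : i -> j; with maps acting on the right
   this reads  x_a *m g_j = g_i *m x_a *)
Definition Wn (n : Om -> nat) (g : forall i, 'M[F]_(alpha i)) (x : rep n) : Prop :=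
  rep_compat x /\ forall a : arrn n, x a *m g (atgt a) = g (asrc a) *m x a.

Definition rep_coord_index (n : Om -> nat) :=
  {a : arrn n & ('I_(alpha (asrc a)) * 'I_(alpha (atgt a)))%type}.

Definition rep_coord (n : Om -> nat) (x : rep n) : rep_coord_index n -> F :=
  fun l => x (tag l) (tagged l).1 (tagged l).2.

Definition rep_subset_dim (n : Om -> nat) (P : rep n -> Prop) : nat :=
  ldim (fun c : rep_coord_index n -> F => exists x, P x /\ c = rep_coord x).

Definition dim_rep (n : Om -> nat) : nat := rep_subset_dim (@rep_compat n).
Definition dim_W (n : Om -> nat) (g : forall i, 'M[F]_(alpha i)) : nat :=
  rep_subset_dim (@Wn n g).

Definition end_coord_index := {i : I & ('I_(alpha i) * 'I_(alpha i))%type}.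

Definition end_coord (g : forall i, 'M[F]_(alpha i)) : end_coord_index -> F :=
  fun l => g (tag l) (tagged l).1 (tagged l).2.

Definition S_rn (r : nat) (n : Om -> nat) (g : forall i, 'M[F]_(alpha i)) : Prop :=
  end_compat g /\ (dim_rep n - r <= dim_W n g)%N.

Definition s_rn (r : nat) (n : Om -> nat) : nat :=
  adim (fun c : end_coord_index -> F => exists g, S_rn r n g /\ c = end_coord g).

End QuiverFlag.

From Pilot Require Import Defs.
From HB Require Import structures.
From mathcomp Require Import all_boot all_order all_algebra.
From mathcomp Require Import complex reals zify.
From Stdlib Require Import Classical ClassicalEpsilon FunctionalExtensionality PropExtensionality.
Set Implicit Arguments. Unset Strict Implicit. Unset Printing Implicit Defensive.
Import GRing.Theory Num.Theory.
Local Open Scope ring_scope.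

(* The codimension of W_n(g) in Rep(Q_n, alpha)_{F*} is either 0 or at least
   min_h n_h.  Indeed, if g fails to commute with a compatible x on some copy of
   an arrow h, say in entry (p, q), then putting that value of x on one copy of
   h at a time (and 0 elsewhere) gives n_h compatible representations, and the
   (p, q) entries of the commutators on the n_h copies are linear forms that
   vanish on W_n(g) and separate them.  Hence S_r = S_0 as soon as
   r < min_h n_h, while s_r <= dim End(alpha) always; so
   n_0 = dim End(alpha) + 1 works, whatever the flag. *)

Lemma pboolP (P : Prop) : pbool P <-> P.
Proof. by rewrite /pbool; case: excluded_middle_informative. Qed.

Section LinearDimension.
Variables (F : fieldType) (L : finType).

Lemma lin_indep_leq_card k (v : 'I_k -> L -> F) : lin_indep v -> (k <= #|L|)%N.
Proof.
move=> indep_v; pose M : 'M[F]_(k, #|L|) := \matrix_(j, l) v j (enum_val l).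
suff <- : \rank M = k by rewrite rank_leq_col.
apply/eqP; rewrite eqn_leq rank_leq_row /= leqNgt; apply/negP => rankM_lt.
have /negP : kermx M != 0 by rewrite -mxrank_eq0 mxrank_ker subn_eq0 -ltnNge.
have MK0 := mulmx_ker M; set K := kermx M in MK0 *; clearbody K.
apply; apply/eqP/row_matrixP => i; apply/rowP => j.
rewrite row0 !mxE; apply: (indep_v (K i)) => l.
have /matrixP/(_ i (enum_rank l)) := MK0; rewrite !mxE.
by under eq_bigr do rewrite !mxE enum_rankK.
Qed.

Lemma lin_indep_leq_ldim (X : (L -> F) -> Prop) k (v : 'I_k -> L -> F) :
  (forall j, X (v j)) -> lin_indep v -> (k <= ldim X)%N.
Proof.
move=> Xv indep_v; have k_small : (k < #|L|.+1)%N by rewrite ltnS (lin_indep_leq_card indep_v).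
by apply: (@leq_bigmax_cond _ _ _ (Ordinal k_small)); apply/pboolP; exists v.
Qed.

Lemma ldim_basis (X : (L -> F) -> Prop) :
  exists2 v : 'I_(ldim X) -> L -> F, forall j, X (v j) & lin_indep v.
Proof.
pose A := [pred k : 'I_#|L|.+1 |
  pbool (exists v : 'I_k -> L -> F, (forall j, X (v j)) /\ lin_indep v)].
have A_gt0 : (0 < #|A|)%N.
  apply/card_gt0P; exists ord0; rewrite inE; apply/pboolP.
  by exists (fun _ _ => 0); split=> [[]|c _ []].
have [k /[!inE] /pboolP [v [Xv indep_v]] ldimE] := eq_bigmax_cond val A_gt0.
by rewrite /ldim -/A ldimE; exists v.
Qed.

Lemma eq_ldim (X Y : (L -> F) -> Prop) : (forall c, X c <-> Y c) -> ldim X = ldim Y.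
Proof.
by move=> XY; congr ldim; apply: functional_extensionality => c; apply: propositional_extensionality.
Qed.

Definition lin_form (phi : (L -> F) -> F) : Prop :=
  forall k (c : 'I_k -> F) (u : 'I_k -> L -> F),
    phi (fun l => \sum_j c j * u j l) = \sum_j c j * phi (u j).

Lemma lin_form_relation (phi : (L -> F) -> F) k (c : 'I_k -> F) (u : 'I_k -> L -> F) :
  lin_form phi -> (forall l, \sum_j c j * u j l = 0) -> \sum_j c j * phi (u j) = 0.
Proof.
move=> lin_phi rel; rewrite -lin_phi.
have -> : (fun l => \sum_j c j * u j l) = (fun l => \sum_(j < 0) 0 * 0).
  by apply: functional_extensionality => l; rewrite rel big_ord0.
by rewrite lin_phi big_ord0.
Qed.

Lemma ldim_add_separated_leq (X W : (L -> F) -> Prop) m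
    (phi : 'I_m -> (L -> F) -> F) (y : 'I_m -> L -> F) :
  (forall c, W c -> X c) -> (forall j, X (y j)) ->
  (forall j, lin_form (phi j)) -> (forall j c, W c -> phi j c = 0) ->
  (forall j, phi j (y j) != 0) -> (forall j j', j != j' -> phi j (y j') = 0) ->
  (ldim W + m <= ldim X)%N.
Proof.
move=> WX Xy lin_phi phiW phi_diag phi_offdiag.
have [w Ww indep_w] := ldim_basis W; set d := ldim W in w Ww indep_w *.
pose u (i : 'I_(d + m)) := match split i with inl k => w k | inr j => y j end.
have uL k : u (lshift m k) = w k by rewrite /u (unsplitK (inl k)).
have uR j : u (rshift d j) = y j by rewrite /u (unsplitK (inr j)).
apply: (@lin_indep_leq_ldim _ _ u) => [i|c rel].
  by rewrite /u; case: splitP => [k|j] _; [apply: WX|].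
have cR j : c (rshift d j) = 0.
  have := lin_form_relation (lin_phi j) rel; rewrite big_split_ord /=.
  rewrite big1 ?add0r => [|k _]; last by rewrite uL phiW ?mulr0.
  rewrite (bigD1 j) //= big1 ?addr0 => [|j' j'_neq]; last first.
    by rewrite uR phi_offdiag ?mulr0 // eq_sym.
  by rewrite uR => /eqP; rewrite mulf_eq0 (negbTE (phi_diag j)) orbF => /eqP.
have cL k : c (lshift m k) = 0.
  apply: (indep_w (fun k => c (lshift m k))) => l.
  have := rel l; rewrite big_split_ord /= [X in _ + X]big1 ?addr0 => [|j _].
    by under eq_bigr do rewrite uL.
  by rewrite cR mul0r.
by move=> i; rewrite -(splitK i); case: (split i) => [k|j] /=; [exact: cL | exact: cR].
Qed.

End LinearDimension.

Lemma adim_leq_card (F : fieldType) (K : finType) (X : (K -> F) -> Prop) : (adim X <= #|K|)%N.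
Proof. by apply/bigmax_leqP => k _; rewrite -ltnS ltn_ord. Qed.

Lemma matrix_nonzero_entry (R : nmodType) m n (A : 'M[R]_(m, n)) :
  A != 0 -> exists i j, A i j != 0.
Proof.
move=> A_neq0; apply: NNPP => no_entry; move/eqP: A_neq0; apply.
apply/matrixP => i j; rewrite mxE; apply/eqP.
by apply: contra_notT no_entry => Aij; exists i, j.
Qed.

Section Quiver.
Variables (F : fieldType) (I Om : finType) (src tgt : Om -> I) (alpha : I -> nat).
Variables (s : nat) (Fl : nat -> forall i : I, 'M[F]_(alpha i)) (n : Om -> nat).

Local Notation rep := (rep F src tgt alpha n).
Local Notation rep_compat := (rep_compat s Fl).
Local Notation coord_index := (rep_coord_index src tgt alpha n).
Local Notation asrc := (asrc src).
Local Notation atgt := (atgt tgt).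
Local Notation dim_W := (dim_W src tgt s Fl n).
Local Notation dim_rep := (dim_rep src tgt s Fl n).

Definition reindex_rep (sigma : forall h, 'I_(n h)) (x : rep) : rep :=
  fun b => x (Tagged (fun h => 'I_(n h)) (sigma (tag b))).

Definition restrict_rep (a : arrn n) (x : rep) : rep :=
  fun b => if b == a then x b else 0.

Lemma rep_compat_reindex sigma x : rep_compat x -> rep_compat (reindex_rep sigma x).
Proof. by move=> compat_x b; apply: (compat_x (Tagged _ (sigma (tag b)))). Qed.

Lemma rep_compat_restrict a x : rep_compat x -> rep_compat (restrict_rep a x).
Proof.
move=> compat_x b k k_le; rewrite /restrict_rep; case: ifP => _; first exact: compat_x.
by rewrite mulmx0 sub0mx.
Qed.

Definition comm_form (g : forall i, 'M[F]_(alpha i)) (a : arrn n)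
    (p : 'I_(alpha (asrc a))) (q : 'I_(alpha (atgt a))) (c : coord_index -> F) : F :=
  \sum_t c (existT _ a (p, t) : coord_index) * g (atgt a) t q
  - \sum_t g (asrc a) p t * c (existT _ a (t, q) : coord_index).
Arguments comm_form : clear implicits.

Lemma comm_form_coord g a p q (x : rep) :
  comm_form g a p q (rep_coord x) = (x a *m g (atgt a) - g (asrc a) *m x a) p q.
Proof. by rewrite /comm_form !mxE. Qed.

Lemma lin_form_comm_form g a p q : lin_form (comm_form g a p q).
Proof.
move=> k c u; rewrite /comm_form.
under [RHS]eq_bigr do rewrite mulrBr !mulr_sumr.
rewrite sumrB [in RHS]exchange_big [X in _ = _ - X]exchange_big /=; congr (_ - _).
  by apply: eq_bigr => t _; rewrite mulr_suml; apply: eq_bigr => j _; rewrite mulrA.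
by apply: eq_bigr => t _; rewrite mulr_sumr; apply: eq_bigr => j _; rewrite mulrCA.
Qed.

Lemma exists_noncommuting_rep g :
  (dim_W g < dim_rep)%N ->
  exists x (a : arrn n), rep_compat x /\ x a *m g (atgt a) - g (asrc a) *m x a != 0.
Proof.
move=> dimW_lt; apply: NNPP => all_commute; move: dimW_lt.
rewrite /Defs.dim_W /Defs.dim_rep /rep_subset_dim.
rewrite (@eq_ldim _ _ _ (fun c => exists x, rep_compat x /\ c = rep_coord x)) ?ltnn // => c.
split=> -[x [Px ->]]; exists x; split=> //; first by case: Px.
split=> // a; apply/eqP; rewrite -subr_eq0; apply: contraT => comm_neq0.
by exfalso; apply: all_commute; exists x, a.
Qed.

Lemma dim_W_gap (n_gt0 : forall h, (0 < n h)%N) g :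
  (dim_W g < dim_rep)%N -> exists h, (dim_W g + n h <= dim_rep)%N.
Proof.
move=> /exists_noncommuting_rep [x [[h j0] [compat_x /matrix_nonzero_entry [p [q D_neq0]]]]].
exists h.
pose sigma h' : 'I_(n h') := insubd (Ordinal (n_gt0 h')) (val j0).
pose a_ (j : 'I_(n h)) : arrn n := Tagged (fun h => 'I_(n h)) j.
pose y j := restrict_rep (a_ j) (reindex_rep sigma x).
have y_diag j : y j (a_ j) = x (a_ j0).
  have sigma_h : sigma h = j0 by apply/val_inj; rewrite val_insubd ltn_ord.
  by rewrite /y /restrict_rep eqxx /reindex_rep /= sigma_h.
have y_offdiag j j' : j != j' -> y j' (a_ j) = 0.
  by move=> j_neq; rewrite /y /restrict_rep eq_Tagged /= (negbTE j_neq).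
apply: (@ldim_add_separated_leq _ _ _ _ _ (fun j => comm_form g (a_ j) p q)
                                         (fun j => rep_coord (y j))).
- by move=> c [x' [[compat_x' _] ->]]; exists x'.
- move=> j; exists (y j); split=> //.
  exact/rep_compat_restrict/rep_compat_reindex.
- by move=> j; apply: lin_form_comm_form.
- by move=> j c [x' [[_ comm_x'] ->]]; rewrite comm_form_coord comm_x' subrr mxE.
- by move=> j; rewrite comm_form_coord y_diag.
- by move=> j j' j_neq; rewrite comm_form_coord y_offdiag // mul0mx mulmx0 subrr mxE.
Qed.

Lemma s_rn_small r :
  (forall h, r < n h)%N -> s_rn src tgt s Fl r n = s_rn src tgt s Fl 0 n.
Proof.
move=> r_lt; have n_gt0 h : (0 < n h)%N by apply: leq_ltn_trans (r_lt h).
have S_rE g : S_rn src tgt s Fl r n g <-> S_rn src tgt s Fl 0 n g.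
  rewrite /S_rn subn0; split=> -[compat_g dim_g]; split=> //.
    rewrite leqNgt; apply/negP => /(dim_W_gap n_gt0) [h].
    by have := r_lt h; move: dim_g; lia.
  exact: leq_trans (leq_subr _ _) dim_g.
rewrite /s_rn; congr adim; apply: functional_extensionality => c.
by apply: propositional_extensionality; split=> -[g [/S_rE S_g ->]]; exists g.
Qed.

End Quiver.

Theorem lemma4p3 (R : realType) (I Om : finType) (src tgt : Om -> I)
    (alpha : I -> nat) (s : nat) (Fl : nat -> forall i : I, 'M[R[i]]_(alpha i)) :
  @is_graded_flag _ I alpha s Fl ->
  exists n0 : Om -> int,
    forall n : Om -> nat,
      (forall h, (1 <= n h)%N) ->
      (forall h, n0 h <= (n h)%:Z) ->
      let s_ r := (@s_rn _ I Om src tgt alpha s Fl r n)%:Z in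
      (exists r : nat, s_ r - r%:Z = s_ 0%N) /\
      (forall r : nat, s_ r - r%:Z <= s_ 0%N).
Proof.
move=> _; pose N := #|{: end_coord_index alpha}|.
exists (fun _ => (N.+1)%:Z) => n _ n_ge s_.
split=> [|r]; first by exists 0%N; rewrite subr0.
rewrite /s_; case: (leqP r N) => [r_le | r_gt].
  rewrite s_rn_small ?gerBl // => h.
  by have := n_ge h; rewrite lez_nat; apply: leq_ltn_trans r_le.
rewrite lerBlDr -PoszD lez_nat.
exact: leq_trans (adim_leq_card _) (leq_trans (ltnW r_gt) (leq_addl _ _)).
Qed.
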